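(* Let $S$ and $R$ be rings, let $\rho: S \to R$ be a surjective ring homomorphism, and let $F_2: R \to 2^{R}$ be a set-valued homomorphism. Define $F_1: S \to 2^{S}$ by $F_1(x) = \{s_1 \in S : \rho(s_1) \in F_2(\rho(x))\}$ for all $x \in S$. Then for every $A \subseteq S$, $\rho(\underline{F_1}(A)) = \underline{F_2}(\rho(A))$.
   Context: For a set-valued map $F: X \to 2^{Y}$ (assigning to each $x \in X$ a subset $F(x) \subseteq Y$) and $M \subseteq Y$, the lower approximation is $\underline{F}(M) = \{x \in X : F(x) \cap M \neq \emptyset\}$. For a ring $R$, $2^{R}$ denotes the set of subsets of $R$. A set-valued homomorphism $F: R \to 2^{R}$ satisfies $F(x+y) = \{a+b : a \in F(x), b \in F(y)\}$ and $F(xy) = \{ab : a \in F(x), b \in F(y)\}$ for all $x, y \in R$. *)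

From mathcomp Require Import all_boot all_algebra.
Set Implicit Arguments. Unset Strict Implicit. Unset Printing Implicit Defensive.
Import GRing.Theory.
Local Open Scope ring_scope.

Definition subset_of (T : Type) := T -> Prop.

Definition lower_approx (X Y : Type) (F : X -> subset_of Y) (M : subset_of Y)
  : subset_of X := fun x => exists y, F x y /\ M y.

Definition set_valued_hom (R : pzRingType) (F : R -> subset_of R) : Prop :=
  (forall x y z, F (x + y) z <-> exists a b, F x a /\ F y b /\ z = a + b) /\
  (forall x y z, F (x * y) z <-> exists a b, F x a /\ F y b /\ z = a * b).

Definition image_set (X Y : Type) (f : X -> Y) (A : subset_of X) : subset_of Y :=
  fun y => exists x, A x /\ y = f x.

Definition pullback_svmap (S R : Type) (rho : S -> R) (F2 : R -> subset_of R)
  : S -> subset_of S := fun x s1 => F2 (rho x) (rho s1).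

From mathcomp Require Import all_boot all_algebra.
Local Open Scope ring_scope.

(* The identity is purely set-theoretic: [x] meets [A] under the pulled-back
   map exactly when [f x] meets [f (A)] under [F], so the image of the lower
   approximation lies in the lower approximation of the image, and
   surjectivity of [f] gives the converse. *)

Section PullbackLowerApprox.

Variables (X Y : Type) (f : X -> Y) (F : Y -> subset_of Y) (A : subset_of X).

Lemma image_lower_approx_pullback_sub (y : Y) :
  image_set f (lower_approx (pullback_svmap f F) A) y ->
  lower_approx F (image_set f A) y.
Proof.
move=> [x [[a [Fxa Aa]] ->]].
by exists (f a); split; last exists a.
Qed.

Lemma lower_approx_image_sub_pullback (y : Y) :
  (exists x, f x = y) ->
  lower_approx F (image_set f A) y ->
  image_set f (lower_approx (pullback_svmap f F) A) y.
Proof.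
move=> [x <-] [b [Fxb [a [Aa Eb]]]].
by exists x; split => //; exists a; rewrite /pullback_svmap -Eb.
Qed.

End PullbackLowerApprox.

Theorem theorem4p2 (S R : pzRingType) (rho : {rmorphism S -> R})
  (rho_surj : forall r : R, exists s : S, rho s = r)
  (F2 : R -> subset_of R) (hF2 : set_valued_hom F2)
  (A : subset_of S) :
  forall r : R,
    image_set rho (lower_approx (pullback_svmap rho F2) A) r <->
    lower_approx F2 (image_set rho A) r.
Proof.
move=> r; split.
- exact: image_lower_approx_pullback_sub.
- exact: lower_approx_image_sub_pullback.
Qed.
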